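(* Let $\gamma: I \to \mathbb{R}^3$ be a unit speed curve with arc-length parameter $s$, Frenet frame $\{T,N,B\}$, curvature $\kappa$ and torsion $\tau$. Let $u,v,w: I \to \mathbb{R}$ be differentiable functions with $u^2+v^2+w^2=1$, put $V = uT + vN + wB$, let $\lambda: I \to \mathbb{R}$ be a differentiable function, and let $\beta(s) = \int_0^s V(t)\,dt + \lambda(s)N(s)$, assumed to be a regular curve with Frenet frame $\{\overline{T},\overline{N},\overline{B}\}$. Then $\gamma$ is a $V$-Mannheim curve (i.e. $\overline{B}(s) = \epsilon N(s)$ with $\epsilon = \pm 1$ for all $s$) if and only if $$u\kappa - w\tau = \lambda(\kappa^2+\tau^2) \quad\text{and}\quad \lambda(s) = -\int v(s)\,ds \ \ (\text{i.e. } \lambda' = -v) \text{ on } I.$$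
   Context: Frenet equations: $T' = \kappa N$, $N' = -\kappa T + \tau B$, $B' = -\tau N$. Definition (from the paper): with $\gamma$, $V$, $\lambda$, $\beta$ as in the claim, $\gamma$ is called a $V$-Mannheim curve and $\beta$ its $V$-Mannheim partner curve if the principal normal $N$ of $\gamma$ and the binormal $\overline{B}$ of $\beta$ are linearly dependent at corresponding points, i.e. $\overline{B} = \epsilon N$, $\epsilon = \pm 1$. It is assumed that $\beta$ is regular with nonvanishing curvature so that its Frenet frame is defined. *)

From Stdlib Require Import Reals.
From Coquelicot Require Import Coquelicot.
Open Scope R_scope.

(* Vectors of R^3 as triples; Coquelicot equips R*R*R with its product
   normed-module structure, so [is_derive (f : R -> R3)] is the usual
   derivative of a space curve. *)
Definition R3 : Type := (R * R * R)%type.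

Definition vx (p : R3) : R := fst (fst p).
Definition vy (p : R3) : R := snd (fst p).
Definition vz (p : R3) : R := snd p.

Definition vadd (p q : R3) : R3 := (vx p + vx q, vy p + vy q, vz p + vz q).
Definition vscal (k : R) (p : R3) : R3 := (k * vx p, k * vy p, k * vz p).
Definition vopp (p : R3) : R3 := vscal (-1) p.
Definition vzero : R3 := (0, 0, 0).

Definition dot (p q : R3) : R := vx p * vx q + vy p * vy q + vz p * vz q.
Definition cross (p q : R3) : R3 :=
  (vy p * vz q - vz p * vy q,
   vz p * vx q - vx p * vz q,
   vx p * vy q - vy p * vx q).
Definition vnorm (p : R3) : R := sqrt (dot p p).

Definition vRInt (f : R -> R3) (a b : R) : R3 :=
  (RInt (fun t => vx (f t)) a b, RInt (fun t => vy (f t)) a b,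
   RInt (fun t => vz (f t)) a b).

(* Frenet frame of a regular curve beta with nonvanishing curvature,
   given its first and second derivatives d1 = beta', d2 = beta'':
   Tbar = beta'/|beta'|, Bbar = (beta' x beta'')/|beta' x beta''|,
   Nbar = Bbar x Tbar. *)
Definition frenetT (d1 : R3) : R3 := vscal (/ vnorm d1) d1.
Definition frenetB (d1 d2 : R3) : R3 :=
  vscal (/ vnorm (cross d1 d2)) (cross d1 d2).
Definition frenetN (d1 d2 : R3) : R3 := cross (frenetB d1 d2) (frenetT d1).

Definition Vfield (u v w : R -> R) (T N B : R -> R3) (s : R) : R3 :=
  vadd (vscal (u s) (T s)) (vadd (vscal (v s) (N s)) (vscal (w s) (B s))).

Definition betaCurve (u v w lambda : R -> R) (T N B : R -> R3) (s : R) : R3 :=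
  vadd (vRInt (Vfield u v w T N B) 0 s) (vscal (lambda s) (N s)).

(* gamma is a V-Mannheim curve: at each point of I = (a,b) the binormal
   Bbar of beta (computed from beta' = d1, beta'' = d2) equals eps * N
   with eps = +1 or -1 (linear dependence of the unit vectors). *)
Definition VMannheim (a b : R) (d1 d2 N : R -> R3) : Prop :=
  forall s, a < s < b ->
    exists eps : R, (eps = 1 \/ eps = -1) /\
      frenetB (d1 s) (d2 s) = vscal eps (N s).

(* Differentiating beta gives
     beta' = (u - lambda kappa) T + (v + lambda') N + (w + lambda tau) B.
   Since Bbar is the normalized beta' x beta'', Bbar = ±N exactly when N is
   orthogonal to both beta' and beta''.  Now beta'.N = v + lambda', and
   (beta'.N)' = beta''.N + beta'.N' where, by the Frenet equations,
   beta'.N' = lambda (kappa^2 + tau^2) - (u kappa - w tau).  Hence beta'.N and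
   beta''.N vanish on I iff lambda' = -v and u kappa - w tau = lambda (kappa^2 + tau^2). *)

From Stdlib Require Import Reals Lra Psatz.
From Coquelicot Require Import Coquelicot.
Open Scope R_scope.

Definition lincomb3 (x y z : R) (p q r : R3) : R3 :=
  vadd (vscal x p) (vadd (vscal y q) (vscal z r)).

Definition coordinate (pr : R3 -> R) : Prop := pr = vx \/ pr = vy \/ pr = vz.

Ltac vec3_ring :=
  repeat match goal with p : R3 |- _ => destruct p as [[? ?] ?] end;
  unfold lincomb3, vadd, vscal, vzero, dot, cross, vx, vy, vz; simpl;
  try (apply (f_equal2 pair); [apply (f_equal2 pair) |]); ring.

Lemma vec3_ext (p q : R3) : (forall pr, coordinate pr -> pr p = pr q) -> p = q.
Proof.
  intros H; destruct p as [[p1 p2] p3], q as [[q1 q2] q3].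
  apply (f_equal2 pair); [apply (f_equal2 pair) |];
    [apply (H vx) | apply (H vy) | apply (H vz)]; unfold coordinate; auto.
Qed.

Lemma vscal_1 (p : R3) : vscal 1 p = p.
Proof. vec3_ring. Qed.

Lemma vscal_vscal (k l : R) (p : R3) : vscal k (vscal l p) = vscal (k * l) p.
Proof. vec3_ring. Qed.

Lemma dot_vscal_l (k : R) (p q : R3) : dot (vscal k p) q = k * dot p q.
Proof. vec3_ring. Qed.

Lemma dot_vscal_r (k : R) (p q : R3) : dot p (vscal k q) = k * dot p q.
Proof. vec3_ring. Qed.

Lemma dot_cross_l (p q : R3) : dot p (cross p q) = 0.
Proof. vec3_ring. Qed.

Lemma dot_cross_r (p q : R3) : dot q (cross p q) = 0.
Proof. vec3_ring. Qed.

Lemma dot_self_pos (p : R3) : p <> vzero -> 0 < dot p p.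
Proof.
  destruct p as [[x y] z]; unfold dot, vzero, vx, vy, vz; simpl; intros Hp.
  apply Rnot_le_lt; intros Hle; apply Hp.
  assert (x = 0) by nra; assert (y = 0) by nra; assert (z = 0) by nra.
  now subst.
Qed.

Lemma vnorm_vscal_unit (c : R) (n : R3) : dot n n = 1 -> vnorm (vscal c n) = Rabs c.
Proof.
  intros Hn; unfold vnorm.
  rewrite dot_vscal_l, dot_vscal_r, Hn, Rmult_1_r, <- sqrt_Rsqr_abs; reflexivity.
Qed.

(* n x (n x X) = (n.X) n - (n.n) X with X = p x q, and n x (p x q) = (n.q) p - (n.p) q. *)
Lemma cross_decomposition (p q n : R3) :
  vscal (dot n n) (cross p q) =
  lincomb3 (dot (cross p q) n) (- dot q n) (dot p n) n (cross n p) (cross n q).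
Proof. vec3_ring. Qed.

Lemma cross_parallel_unit_iff (p q n : R3) :
  cross p q <> vzero -> dot n n = 1 ->
  cross p q = vscal (dot (cross p q) n) n <-> dot p n = 0 /\ dot q n = 0.
Proof.
  intros Hpq Hn; split.
  - intros Hpar.
    assert (Hc : dot (cross p q) n <> 0).
    { intros Hc; apply Hpq; rewrite Hpar, Hc; vec3_ring. }
    pose proof (dot_cross_l p q) as Hp; pose proof (dot_cross_r p q) as Hq.
    rewrite Hpar, dot_vscal_r in Hp, Hq.
    split; [destruct (Rmult_integral _ _ Hp) | destruct (Rmult_integral _ _ Hq)]; tauto.
  - intros [Hp Hq].
    pose proof (cross_decomposition p q n) as Hdec.
    rewrite Hp, Hq, Hn, vscal_1 in Hdec.
    rewrite Hdec at 1; vec3_ring.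
Qed.

Lemma unit_normalize_sign_iff (X n : R3) :
  X <> vzero -> dot n n = 1 ->
  (exists eps, (eps = 1 \/ eps = -1) /\ vscal (/ vnorm X) X = vscal eps n) <->
  X = vscal (dot X n) n.
Proof.
  intros HX Hn.
  assert (Hnorm : 0 < vnorm X) by (apply sqrt_lt_R0, dot_self_pos, HX).
  split.
  - intros [eps [_ Heq]].
    assert (HXn : X = vscal (vnorm X * eps) n).
    { rewrite <- vscal_vscal, <- Heq, vscal_vscal, Rinv_r, vscal_1 by lra.
      reflexivity. }
    rewrite HXn at 2; rewrite dot_vscal_l, Hn, Rmult_1_r; exact HXn.
  - intros HXn.
    set (c := dot X n) in HXn.
    assert (Hc : c <> 0) by (intros Hc; apply HX; rewrite HXn, Hc; vec3_ring).
    rewrite HXn, vnorm_vscal_unit, vscal_vscal by exact Hn.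
    destruct (Rlt_or_le 0 c) as [Hpos | Hneg].
    + exists 1; split; [now left |].
      rewrite Rabs_pos_eq, Rinv_l by lra; reflexivity.
    + exists (-1); split; [now right |].
      rewrite Rabs_left by lra.
      replace (/ - c * c) with (-1) by (field; lra); reflexivity.
Qed.

Lemma frenetB_sign_iff (d1 d2 n : R3) :
  cross d1 d2 <> vzero -> dot n n = 1 ->
  (exists eps, (eps = 1 \/ eps = -1) /\ frenetB d1 d2 = vscal eps n) <->
  dot d1 n = 0 /\ dot d2 n = 0.
Proof.
  intros Hreg Hn; unfold frenetB.
  rewrite unit_normalize_sign_iff by assumption.
  exact (cross_parallel_unit_iff d1 d2 n Hreg Hn).
Qed.

Lemma dot_lincomb3_orthonormal (x y z x' y' z' : R) (t n : R3) :
  dot t t = 1 -> dot n n = 1 -> dot t n = 0 ->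
  dot (lincomb3 x y z t n (cross t n)) (lincomb3 x' y' z' t n (cross t n)) =
  x * x' + y * y' + z * z'.
Proof.
  intros Ht Hn Htn.
  transitivity (x * x' * dot t t + y * y' * dot n n
                + z * z' * (dot t t * dot n n - dot t n ^ 2)
                + (x * y' + y * x') * dot t n); [vec3_ring |].
  rewrite Ht, Hn, Htn; ring.
Qed.

Lemma lincomb3_mid (p q r : R3) : q = lincomb3 0 1 0 p q r.
Proof. vec3_ring. Qed.

Lemma lincomb3_outer (x z : R) (p q r : R3) :
  vadd (vscal x p) (vscal z r) = lincomb3 x 0 z p q r.
Proof. vec3_ring. Qed.

Lemma dot_lincomb3_orthonormal_mid (x y z : R) (t n : R3) :
  dot t t = 1 -> dot n n = 1 -> dot t n = 0 ->
  dot (lincomb3 x y z t n (cross t n)) n = y.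
Proof.
  intros Ht Hn Htn.
  rewrite (lincomb3_mid t n (cross t n)) at 3.
  rewrite dot_lincomb3_orthonormal by assumption; ring.
Qed.

Section Coordinates.

Variable pr : R3 -> R.
Hypothesis Hpr : coordinate pr.

Lemma coordinate_vadd (p q : R3) : pr (vadd p q) = pr p + pr q.
Proof. destruct Hpr as [-> | [-> | ->]]; reflexivity. Qed.

Lemma coordinate_vscal (k : R) (p : R3) : pr (vscal k p) = k * pr p.
Proof. destruct Hpr as [-> | [-> | ->]]; reflexivity. Qed.

Lemma coordinate_vRInt (f : R -> R3) (x y : R) :
  pr (vRInt f x y) = RInt (fun t => pr (f t)) x y.
Proof. destruct Hpr as [-> | [-> | ->]]; reflexivity. Qed.

Lemma coordinate_linear : is_linear (pr : R3 -> R).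
Proof.
  destruct Hpr as [-> | [-> | ->]]; unfold vx, vy, vz.
  - exact (is_linear_comp _ _ is_linear_fst is_linear_fst).
  - exact (is_linear_comp _ _ is_linear_fst is_linear_snd).
  - exact is_linear_snd.
Qed.

End Coordinates.

Lemma is_derive_linear {U V : NormedModule R_AbsRing} (L : U -> V)
    (f : R -> U) (s : R) (l : U) :
  is_linear L -> is_derive f s l -> is_derive (fun t => L (f t)) s (L l).
Proof.
  intros HL Hf; unfold is_derive in *.
  apply filterdiff_ext_lin with (fun y => L (scal y l)).
  - exact (filterdiff_comp' f L s _ _ Hf (filterdiff_linear L HL)).
  - intros y; exact (linear_scal L HL y l).
Qed.

Lemma is_derive_coordinate (pr : R3 -> R) (f : R -> R3) (s : R) (l : R3) :
  coordinate pr -> is_derive f s l -> is_derive (fun t => pr (f t)) s (pr l).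
Proof. intros Hpr; exact (is_derive_linear pr f s l (coordinate_linear pr Hpr)). Qed.

Lemma is_derive_dot (p q : R -> R3) (s : R) (dp dq : R3) :
  is_derive p s dp -> is_derive q s dq ->
  is_derive (fun t => dot (p t) (q t)) s (dot dp (q s) + dot (p s) dq).
Proof.
  intros Hp Hq.
  assert (Hcoord : forall pr, coordinate pr ->
    is_derive (fun t => pr (p t) * pr (q t)) s (pr dp * pr (q s) + pr (p s) * pr dq)).
  { intros pr Hpr.
    apply (is_derive_mult (fun t => pr (p t)) (fun t => pr (q t)));
      [exact (is_derive_coordinate pr p s dp Hpr Hp)
      | exact (is_derive_coordinate pr q s dq Hpr Hq) | exact Rmult_comm]. }
  replace (dot dp (q s) + dot (p s) dq) with
    ((vx dp * vx (q s) + vx (p s) * vx dq) + (vy dp * vy (q s) + vy (p s) * vy dq)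
     + (vz dp * vz (q s) + vz (p s) * vz dq)) by (unfold dot; ring).
  assert (Hx : coordinate vx) by (left; reflexivity).
  assert (Hy : coordinate vy) by (right; left; reflexivity).
  assert (Hz : coordinate vz) by (right; right; reflexivity).
  exact (is_derive_plus _ _ s _ _
           (is_derive_plus _ _ s _ _ (Hcoord vx Hx) (Hcoord vy Hy)) (Hcoord vz Hz)).
Qed.

Lemma is_derive_RInt_interval (g : R -> R) (a b c s : R) :
  a < c < b -> (forall t, a < t < b -> continuous g t) -> a < s < b ->
  is_derive (fun x => RInt g c x) s (g s).
Proof.
  intros Hc Hg Hs; apply (is_derive_RInt g _ c s); [| now apply Hg].
  apply (locally_interval _ s a b); simpl; try lra.
  intros y Hy1 Hy2; apply (RInt_correct g c y), (ex_RInt_continuous g).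
  intros z Hz; apply Hg; split.
  - apply Rlt_le_trans with (Rmin c y); [apply Rmin_glb_lt |]; lra.
  - apply Rle_lt_trans with (Rmax c y); [| apply Rmax_lub_lt]; lra.
Qed.

Lemma is_derive_zero_on_interval (f : R -> R) (a b s l : R) :
  (forall t, a < t < b -> f t = 0) -> a < s < b -> is_derive f s l -> l = 0.
Proof.
  intros Hf Hs Hd.
  assert (H0 : is_derive f s 0).
  { apply (is_derive_ext_loc (fun _ => 0)); [| exact (is_derive_const 0 s)].
    apply (locally_interval _ s a b); simpl; try lra.
    intros y Hy1 Hy2; symmetry; apply Hf; lra. }
  now rewrite <- (is_derive_unique _ _ _ Hd), (is_derive_unique _ _ _ H0).
Qed.

Lemma vanish_with_derivative_iff (f g h : R -> R) (a b : R) :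
  (forall s, a < s < b -> is_derive f s (g s + h s)) ->
  (forall s, a < s < b -> f s = 0 /\ g s = 0) <->
  (forall s, a < s < b -> f s = 0 /\ h s = 0).
Proof.
  intros Hd.
  assert (Hsum : (forall t, a < t < b -> f t = 0) -> forall s, a < s < b -> g s + h s = 0).
  { intros Hf s Hs; exact (is_derive_zero_on_interval f a b s _ Hf Hs (Hd s Hs)). }
  split; intros H s Hs; split; try apply (H s Hs);
    pose proof (Hsum (fun t Ht => proj1 (H t Ht)) s Hs); pose proof (proj2 (H s Hs)); lra.
Qed.

Section BetaFrame.

Variables (a b : R) (T N B : R -> R3) (kappa tau u v w lambda : R -> R).
Variable beta1 : R -> R3.

Hypothesis Hab : a < 0 < b.
Hypothesis HdT : forall s, a < s < b -> is_derive T s (vscal (kappa s) (N s)).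
Hypothesis HdN : forall s, a < s < b ->
  is_derive N s (vadd (vscal (- kappa s) (T s)) (vscal (tau s) (B s))).
Hypothesis HdB : forall s, a < s < b -> is_derive B s (vscal (- tau s) (N s)).
Hypothesis Hu : forall s, a < s < b -> ex_derive u s.
Hypothesis Hv : forall s, a < s < b -> ex_derive v s.
Hypothesis Hw : forall s, a < s < b -> ex_derive w s.
Hypothesis Hlambda : forall s, a < s < b -> ex_derive lambda s.
Hypothesis Hbeta1 : forall s, a < s < b ->
  is_derive (betaCurve u v w lambda T N B) s (beta1 s).

Lemma Vfield_coordinate_continuous (pr : R3 -> R) (s : R) :
  coordinate pr -> a < s < b -> continuous (fun t => pr (Vfield u v w T N B t)) s.
Proof.
  intros Hpr Hs.
  assert (Hterm : forall (c : R -> R) (F dF : R -> R3),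
            (forall t, a < t < b -> ex_derive c t) ->
            (forall t, a < t < b -> is_derive F t (dF t)) ->
            continuous (fun t => c t * pr (F t)) s).
  { intros c F dF Hc HF.
    apply (continuous_mult c (fun t => pr (F t))).
    - apply (ex_derive_continuous c), Hc, Hs.
    - apply (ex_derive_continuous (fun t => pr (F t))).
      exists (pr (dF s)); exact (is_derive_coordinate pr F s _ Hpr (HF s Hs)). }
  apply (continuous_ext (fun t => u t * pr (T t) + (v t * pr (N t) + w t * pr (B t)))).
  { intros t; unfold Vfield; now rewrite !coordinate_vadd, !coordinate_vscal. }
  apply (continuous_plus (fun t => u t * pr (T t)) (fun t => v t * pr (N t) + w t * pr (B t)));
    [| apply (continuous_plus (fun t => v t * pr (N t)) (fun t => w t * pr (B t)))];
    [exact (Hterm u T _ Hu HdT) | exact (Hterm v N _ Hv HdN) | exact (Hterm w B _ Hw HdB)].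
Qed.

Lemma beta1_frame (s : R) : a < s < b ->
  beta1 s = lincomb3 (u s - lambda s * kappa s) (v s + Derive lambda s)
                     (w s + lambda s * tau s) (T s) (N s) (B s).
Proof.
  intros Hs; apply vec3_ext; intros pr Hpr.
  set (dN := vadd (vscal (- kappa s) (T s)) (vscal (tau s) (B s))).
  assert (Hint : is_derive (fun x => RInt (fun t => pr (Vfield u v w T N B t)) 0 x) s
                   (pr (Vfield u v w T N B s))).
  { apply (is_derive_RInt_interval (fun t => pr (Vfield u v w T N B t)) a b); auto.
    intros t Ht; exact (Vfield_coordinate_continuous pr t Hpr Ht). }
  assert (Hprod : is_derive (fun t => lambda t * pr (N t)) s
                    (Derive lambda s * pr (N s) + lambda s * pr dN)).
  { apply (is_derive_mult lambda (fun t => pr (N t)));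
      [apply Derive_correct, Hlambda, Hs
      | exact (is_derive_coordinate pr N s _ Hpr (HdN s Hs)) | exact Rmult_comm]. }
  assert (Hbeta : is_derive (fun t => pr (betaCurve u v w lambda T N B t)) s
                    (pr (Vfield u v w T N B s) + (Derive lambda s * pr (N s) + lambda s * pr dN))).
  { apply (is_derive_ext (fun x => RInt (fun t => pr (Vfield u v w T N B t)) 0 x
                                   + lambda x * pr (N x))).
    { intros t; unfold betaCurve.
      now rewrite coordinate_vadd, coordinate_vRInt, coordinate_vscal. }
    exact (is_derive_plus _ _ s _ _ Hint Hprod). }
  rewrite <- (is_derive_unique _ _ _ (is_derive_coordinate pr _ s _ Hpr (Hbeta1 s Hs))),
    (is_derive_unique _ _ _ Hbeta).
  unfold dN, Vfield, lincomb3; rewrite !coordinate_vadd, !coordinate_vscal by exact Hpr.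
  ring.
Qed.

Hypothesis HTT : forall s, a < s < b -> dot (T s) (T s) = 1.
Hypothesis HNN : forall s, a < s < b -> dot (N s) (N s) = 1.
Hypothesis HTN : forall s, a < s < b -> dot (T s) (N s) = 0.
Hypothesis HB : forall s, a < s < b -> B s = cross (T s) (N s).

Lemma dot_beta1_N (s : R) : a < s < b ->
  dot (beta1 s) (N s) = v s + Derive lambda s.
Proof.
  intros Hs.
  rewrite beta1_frame, HB by exact Hs.
  now apply dot_lincomb3_orthonormal_mid; auto.
Qed.

Lemma dot_beta1_dN (s : R) : a < s < b ->
  dot (beta1 s) (vadd (vscal (- kappa s) (T s)) (vscal (tau s) (B s))) =
  lambda s * (kappa s ^ 2 + tau s ^ 2) - (u s * kappa s - w s * tau s).
Proof.
  intros Hs.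
  rewrite beta1_frame, (lincomb3_outer _ _ (T s) (N s) (B s)) by exact Hs.
  rewrite HB, dot_lincomb3_orthonormal by auto; ring.
Qed.

End BetaFrame.

Theorem mainTheorem1
  (a b : R) (gamma T N B : R -> R3) (kappa tau u v w lambda : R -> R)
  (beta1 beta2 : R -> R3)
  (* I = (a,b) is an open interval containing 0 (the base point of the integral) *)
  (Hab : a < 0 < b)
  (* gamma is unit speed with Frenet frame {T,N,B}, curvature kappa > 0, torsion tau *)
  (Hgamma : forall s, a < s < b -> is_derive gamma s (T s))
  (HTT : forall s, a < s < b -> dot (T s) (T s) = 1)
  (HNN : forall s, a < s < b -> dot (N s) (N s) = 1)
  (HTN : forall s, a < s < b -> dot (T s) (N s) = 0)
  (HB : forall s, a < s < b -> B s = cross (T s) (N s))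
  (Hkappa : forall s, a < s < b -> 0 < kappa s)
  (HdT : forall s, a < s < b -> is_derive T s (vscal (kappa s) (N s)))
  (HdN : forall s, a < s < b ->
     is_derive N s (vadd (vscal (- kappa s) (T s)) (vscal (tau s) (B s))))
  (HdB : forall s, a < s < b -> is_derive B s (vscal (- tau s) (N s)))
  (* u, v, w differentiable with u^2+v^2+w^2 = 1; lambda differentiable *)
  (Hu : forall s, a < s < b -> ex_derive u s)
  (Hv : forall s, a < s < b -> ex_derive v s)
  (Hw : forall s, a < s < b -> ex_derive w s)
  (Huvw : forall s, a < s < b -> u s ^ 2 + v s ^ 2 + w s ^ 2 = 1)
  (Hlambda : forall s, a < s < b -> ex_derive lambda s)
  (* beta(s) = int_0^s V + lambda N, with beta' = beta1, beta'' = beta2 on I *)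
  (Hbeta1 : forall s, a < s < b ->
     is_derive (betaCurve u v w lambda T N B) s (beta1 s))
  (Hbeta2 : forall s, a < s < b -> is_derive beta1 s (beta2 s))
  (* beta regular with nonvanishing curvature: beta' x beta'' <> 0 *)
  (Hreg : forall s, a < s < b -> cross (beta1 s) (beta2 s) <> vzero) :
  VMannheim a b beta1 beta2 N <->
  ((forall s, a < s < b ->
      u s * kappa s - w s * tau s = lambda s * (kappa s ^ 2 + tau s ^ 2)) /\
   (forall s, a < s < b -> is_derive lambda s (- v s))).
Proof.
  pose proof (dot_beta1_N a b T N B kappa tau u v w lambda beta1
                Hab HdT HdN HdB Hu Hv Hw Hlambda Hbeta1 HTT HNN HTN HB) as HdotN.
  pose proof (dot_beta1_dN a b T N B kappa tau u v w lambda beta1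
                Hab HdT HdN HdB Hu Hv Hw Hlambda Hbeta1 HTT HNN HTN HB) as HdotdN.
  assert (Hderiv : forall s, a < s < b ->
    is_derive (fun t => dot (beta1 t) (N t)) s
      (dot (beta2 s) (N s) +
       (lambda s * (kappa s ^ 2 + tau s ^ 2) - (u s * kappa s - w s * tau s)))).
  { intros s Hs; rewrite <- HdotdN by exact Hs.
    apply is_derive_dot; auto. }
  transitivity (forall s, a < s < b -> dot (beta1 s) (N s) = 0 /\ dot (beta2 s) (N s) = 0).
  { unfold VMannheim; split; intros H s Hs; apply (frenetB_sign_iff _ _ _ (Hreg s Hs) (HNN s Hs));
      exact (H s Hs). }
  rewrite (vanish_with_derivative_iff _ _ _ a b Hderiv).
  split.
  - intros H; split; intros s Hs; destruct (H s Hs) as [H1 H2]; rewrite HdotN in H1 by exact Hs.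
    + lra.
    + replace (- v s) with (Derive lambda s) by lra; apply Derive_correct, Hlambda, Hs.
  - intros [Hid Hl] s Hs.
    rewrite HdotN, (is_derive_unique _ _ _ (Hl s Hs)), Hid by exact Hs; split; ring.
Qed.
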